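(* Let $A\subset E$ be nonempty with finitely many minimal elements. Then the problem $$\min_L \xi(L)\quad\text{s.t. } L\text{ is a lower contour set in } A$$ admits a solution and has a largest minimizer, i.e. a minimizer $L^\star$ such that every minimizer $L$ satisfies $L\subset L^\star$.
   Context: $E$ is a finite or countably infinite set with a preorder $\precsim$ (reflexive and transitive) such that for every sequence $e_1\succsim e_2\succsim\cdots$ in $E$ there is $N\ge1$ with $e_N\precsim e_n$ for all $n\ge N$. Write $e\sim e'$ if $e\precsim e'$ and $e'\precsim e$. The minimal elements of $A$ are $\min(A,\precsim)=\{e\in A:\forall e'\in A,\ e'\precsim e\Rightarrow e'\sim e\}$. $\pi_0\in(0,1)$; $F_G,F_B$ are probability distributions on $E$ such that every $e\in E$ has $F_G(e)>0$ or $F_B(e)>0$. For nonempty $B\subset E$, $\nu(B)=\frac{F_G(B)\pi_0}{F_G(B)\pi_0+F_B(B)(1-\pi_0)}$ and $\xi(B)=\phi(\nu(B))$, where $\phi:[0,1]\to\mathbb{R}$ is strictly increasing. For nonempty $A\subset E$, a nonempty $L\subset A$ is a lower contour set in $A$ if for all $e\in L$ and $e'\in A$, $e'\precsim e$ implies $e'\in L$. *)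

From HB Require Import structures.
From mathcomp Require Import all_boot all_order all_algebra.
From mathcomp Require Import all_classical all_reals ereal esum.
Set Implicit Arguments. Unset Strict Implicit. Unset Printing Implicit Defensive.
Import Order.TTheory GRing.Theory Num.Theory.
Local Open Scope classical_set_scope.
Local Open Scope ring_scope.

Definition preorder_cond (E : Type) (le : E -> E -> Prop) : Prop :=
  [/\ (forall e, le e e),
      (forall a b c, le a b -> le b c -> le a c) &
      (forall s : nat -> E, (forall n, le (s n.+1) (s n)) ->
         exists N, forall n, (N <= n)%N -> le (s N) (s n))].

Definition is_pmf (R : realType) (E : choiceType) (f : E -> R) : Prop :=
  (forall e, 0 <= f e) /\ (\esum_(i in [set: E]) (f i)%:E = 1%E).

Definition mass (R : realType) (E : choiceType) (f : E -> R) (B : set E) : R :=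
  fine (\esum_(i in B) (f i)%:E).

Definition nu (R : realType) (E : choiceType) (pi0 : R) (FG FB : E -> R) (B : set E) : R :=
  mass FG B * pi0 / (mass FG B * pi0 + mass FB B * (1 - pi0)).

Definition xi (R : realType) (E : choiceType) (phi : R -> R) (pi0 : R) (FG FB : E -> R)
  (B : set E) : R := phi (nu pi0 FG FB B).

Definition equiv_pre (E : Type) (le : E -> E -> Prop) (e e' : E) : Prop :=
  le e e' /\ le e' e.

Definition minimals (E : Type) (le : E -> E -> Prop) (A : set E) : set E :=
  [set e | A e /\ forall e', A e' -> le e' e -> equiv_pre le e' e].

Definition lower_contour (E : Type) (le : E -> E -> Prop) (A L : set E) : Prop :=
  [/\ L !=set0, L `<=` A &
      forall e e', L e -> A e' -> le e' e -> L e'].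

Definition is_minimizer (R : realType) (E : choiceType) (le : E -> E -> Prop)
  (phi : R -> R) (pi0 : R) (FG FB : E -> R) (A L : set E) : Prop :=
  lower_contour le A L /\
  forall L', lower_contour le A L' -> xi phi pi0 FG FB L <= xi phi pi0 FG FB L'.

From HB Require Import structures.
From mathcomp Require Import all_boot all_order all_algebra.
From mathcomp Require Import all_classical all_reals ereal esum.
From mathcomp Require Import ring lra zify.
Import Order.TTheory GRing.Theory Num.Theory.
Local Open Scope classical_set_scope.
Local Open Scope ring_scope.
Set Implicit Arguments. Unset Strict Implicit.

(* Let lam be the infimum of nu over the lower contour sets in A and put
     h(L) = pi0 (1 - lam) F_G(L) - lam (1 - pi0) F_B(L)
          = (nu(L) - lam) (F_G(L) pi0 + F_B(L) (1 - pi0)).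
   Since phi is increasing, the minimizers are exactly the lower contour sets L
   with h(L) <= 0.  Now h is a countably additive signed measure that is
   nonnegative on the downward closed subsets of A, so for such X and Y we get
   h(X `&` Y) <= h(X) + h(Y), and h(X `|` Y) <= 0 when h(X), h(Y) <= 0.
   Pick lower contour sets L_n with h(L_n) <= 2^-n.  Each contains one of the
   finitely many minimal elements, so we may assume they all contain the same
   one; then lim inf L_n is a lower contour set with
   h(lim inf L_n) <= lim_N 2^(1-N) = 0, i.e. a minimizer.  By the same additivity
   argument the union of all minimizers is again a minimizer, the largest one.
   Countable additivity is only used through tightness: modifying a set outside
   a suitable finite set changes h by at most eps. *)

Section InversePowersOfTwo.
Variable R : archiRealFieldType.

Lemma exprV2S n : (2 : R) ^- n.+1 = 2 ^- n / 2.
Proof. by rewrite exprSr invfM. Qed.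

Lemma exprV2_gt0 n : 0 < (2 : R) ^- n.
Proof. by rewrite invr_gt0 exprn_gt0. Qed.

Lemma exprV2_le m n : (m <= n)%N -> (2 : R) ^- n <= 2 ^- m.
Proof. by move=> mn; rewrite -!exprVn ler_wiXn2l // ?invf_le1 ?invr_ge0 // ler1n. Qed.

Lemma exprV2_small eps : 0 < eps -> exists N, (2 : R) ^- N <= eps.
Proof.
move=> eps_gt0; have := @archi_boundP R eps^-1; rewrite invr_ge0 ltW // => /(_ isT).
set N := Num.Def.archi_bound _ => epsVN; exists N.
rewrite -[eps]invrK lef_pV2 ?posrE ?exprn_gt0 ?invr_gt0 //.
apply: le_trans (ltW epsVN) _.
by rewrite -natrX ler_nat ltnW // ltn_expl.
Qed.

End InversePowersOfTwo.

Definition split_additive (R : numDomainType) (T : Type) (h : set T -> R) :=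
  forall S B, h S = h (S `&` B) + h (S `\` B).

Definition tight (R : numDomainType) (T : eqType) (h : set T -> R) :=
  forall eps, 0 < eps -> exists s : seq T, forall S, `|h (S `\` [set` s])| <= eps.

Section ProbabilityMass.
Variables (R : realType) (E : choiceType) (f : E -> R).
Hypothesis f_pmf : is_pmf f.

Let f_ge0 (S : set E) i : S i -> (0 <= (f i)%:E)%E.
Proof. by rewrite lee_fin; case: f_pmf. Qed.

Lemma esum_pmf_le1 S : (\esum_(i in S) (f i)%:E <= 1)%E.
Proof.
case: f_pmf => _ <-; rewrite [X in (_ <= X)%E](esumID S) ?setTI; last exact: f_ge0.
by rewrite leeDl // esum_ge0 // => i; apply: f_ge0.
Qed.

Lemma esum_pmfE S : \esum_(i in S) (f i)%:E = (mass f S)%:E.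
Proof.
have S_ge0 : (0 <= \esum_(i in S) (f i)%:E)%E by apply: esum_ge0; apply: f_ge0.
by rewrite /mass fineK // ge0_fin_numE // (le_lt_trans (esum_pmf_le1 S)) ?ltry.
Qed.

Lemma mass_ge0 S : 0 <= mass f S.
Proof. by rewrite -lee_fin -esum_pmfE; apply: esum_ge0; apply: f_ge0. Qed.

Lemma mass_le1 S : mass f S <= 1.
Proof. by rewrite -lee_fin -esum_pmfE esum_pmf_le1. Qed.

Lemma mass_set1 e : mass f [set e] = f e.
Proof. by rewrite /mass esum_set1 //; apply: (f_ge0 (S := setT)). Qed.

Lemma mass_split : split_additive (mass f).
Proof.
move=> S B; apply/eqP; rewrite -eqe EFinD -!esum_pmfE setDE.
by rewrite (esumID B); last exact: f_ge0.
Qed.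

Lemma mass_le S T : S `<=` T -> mass f S <= mass f T.
Proof. by move=> ST; rewrite (mass_split T S) (setIidr ST) lerDl mass_ge0. Qed.

Lemma mass_tight : tight (mass f).
Proof.
move=> eps eps_gt0.
have : ((1 - eps)%:E < \esum_(i in [set: E]) (f i)%:E)%E.
  by case: f_pmf => _ ->; rewrite lte_fin ltrBlDr ltrDl.
move=> /ereal_sup_gt[_ [X [X_fin _] <-]].
rewrite -(esum_fset X_fin); last by move=> i _; apply: (f_ge0 (S := setT)).
have [s ->] := (finite_seqP X).1 X_fin; rewrite esum_pmfE lte_fin => s_big.
exists s => S; rewrite ger0_norm ?mass_ge0 //.
have := mass_split setT [set` s]; rewrite setTI.
have -> : mass f setT = 1 by rewrite /mass; case: f_pmf => _ ->.
have /mass_le : S `\` [set` s] `<=` setT `\` [set` s] by apply: setSD.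
lra.
Qed.

End ProbabilityMass.

Lemma split_additive_lincomb (R : numDomainType) (T : Type) (a b : R)
    (g1 g2 : set T -> R) :
  split_additive g1 -> split_additive g2 ->
  split_additive (fun X => a * g1 X - b * g2 X).
Proof. by move=> g1_split g2_split S B; rewrite (g1_split S B) (g2_split S B); ring. Qed.

Lemma tight_lincomb (R : realFieldType) (T : eqType) (a b : R)
    (g1 g2 : set T -> R) :
  tight g1 -> tight g2 -> tight (fun X => a * g1 X - b * g2 X).
Proof.
move=> g1_tight g2_tight eps eps_gt0.
have c_gt0 : 0 < `|a| + `|b| + 1 by rewrite ltr_wpDl ?addr_ge0.
have eps'_gt0 : 0 < eps / (`|a| + `|b| + 1) by rewrite divr_gt0.
have [s1 g1_s1] := g1_tight _ eps'_gt0; have [s2 g2_s2] := g2_tight _ eps'_gt0.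
exists (s1 ++ s2) => S.
have s12E : [set` (s1 ++ s2)] = [set` s1] `|` [set` s2].
  by rewrite predeqE => x /=; rewrite mem_cat; split => /orP.
have := g1_s1 (S `\` [set` s2]); have := g2_s2 (S `\` [set` s1]).
rewrite !setDDl [_ `|` [set` s1]]setUC -s12E.
set e' := eps / _; set x1 := g1 _; set x2 := g2 _ => x2_le x1_le.
have -> : eps = (`|a| + `|b| + 1) * e' by rewrite mulrC divfK ?gt_eqF.
apply: (le_trans (ler_normB _ _)); rewrite !normrM.
have := ler_wpM2l (normr_ge0 a) x1_le; have := ler_wpM2l (normr_ge0 b) x2_le.
have : 0 <= e' by rewrite ltW ?divr_gt0.
nra.
Qed.

Section SplitAdditive.
Variables (R : realFieldType) (T : Type) (h : set T -> R).
Hypothesis h_split : split_additive h.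

Lemma split_additive_set0 : h set0 = 0.
Proof. by have := h_split set0 set0; rewrite set0I set0D; lra. Qed.

Lemma split_additive_setUI X Y : h (X `|` Y) + h (X `&` Y) = h X + h Y.
Proof.
rewrite (h_split (X `|` Y) X) (h_split Y X) setIUl setIid setIC.
by rewrite setDUl setDv set0U setUidl ?subIsetl //; ring.
Qed.

End SplitAdditive.

Definition eventually_agree (T : Type) (X : nat -> set T) (Y : set T) :=
  forall x, exists K, forall k, (K <= k)%N -> X k x <-> Y x.

Section EventuallyAgree.
Variable T : Type.

Lemma eventually_agree_bigcap (X : nat -> set T) :
  {homo X : m n / (m <= n)%N >-> n `<=` m} -> eventually_agree X (\bigcap_k X k).
Proof.
move=> X_dec x; have [Xx|/existsNP[k0 /not_implyP[_ Xk0x]]] := pselect ((\bigcap_k X k) x).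
  by exists 0%N => k _; split => // _; apply: Xx.
by exists k0 => k k0k; split => [/(X_dec _ _ k0k)|/(_ k0 I)].
Qed.

Lemma eventually_agree_bigcup (X : nat -> set T) :
  {homo X : m n / (m <= n)%N >-> m `<=` n} -> eventually_agree X (\bigcup_k X k).
Proof.
move=> X_inc x; have [[k0 _ Xk0x]|nXx] := pselect ((\bigcup_k X k) x).
  exists k0 => k k0k; split => [Xkx|_]; first by exists k.
  exact: (X_inc _ _ k0k _ Xk0x).
by exists 0%N => k _; split => [Xkx|//]; exfalso; apply: nXx; exists k.
Qed.

End EventuallyAgree.

Lemma eventually_agree_setI (T : eqType) (X : nat -> set T) Y (s : seq T) :
  eventually_agree X Y ->
  exists K, forall k, (K <= k)%N -> X k `&` [set` s] = Y `&` [set` s].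
Proof.
move=> XY; elim: s => [|x s [K XYs]].
  by exists 0%N => k _; rewrite !predeqE => y; split => -[].
have [Kx XYx] := XY x; exists (maxn K Kx) => k; rewrite geq_max => /andP[Kk Kxk].
rewrite predeqE => y /=; rewrite in_cons.
have [->|_] /= := eqVneq y x; first by have := XYx k Kxk; tauto.
by have /predeqP/(_ y) := XYs k Kk.
Qed.

Section Tight.
Variables (R : realFieldType) (T : eqType) (h : set T -> R).
Hypotheses (h_split : split_additive h) (h_tight : tight h).

Lemma le_of_setI_eq (s : seq T) eps X Y :
  (forall S, `|h (S `\` [set` s])| <= eps) ->
  X `&` [set` s] = Y `&` [set` s] -> h X <= h Y + 2 * eps.
Proof.
move=> h_s XYs; rewrite (h_split X [set` s]) (h_split Y [set` s]) XYs.
by have := h_s X; have := h_s Y; rewrite !ler_norml => /andP[? _] /andP[_ ?]; lra.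
Qed.

Lemma le_of_eventually_agree X Y c : eventually_agree X Y ->
  (exists K, forall k, (K <= k)%N -> h (X k) <= c) -> h Y <= c.
Proof.
move=> XY [K hX]; apply/ler_addgt0Pr => eps eps_gt0.
have [s h_s] := h_tight (divr_gt0 eps_gt0 (ltr0Sn R 1)).
have [K' XYs] := eventually_agree_setI s XY.
have := le_of_setI_eq h_s (esym (XYs _ (leq_maxr K K'))).
have := hX _ (leq_maxl K K'); lra.
Qed.

End Tight.

Definition set_liminf (T : Type) (X : nat -> set T) : set T :=
  \bigcup_N \bigcap_(n in [set n | (N <= n)%N]) X n.

Section Downset.
Variables (E : Type) (le : E -> E -> Prop) (A : set E).

Definition downset D :=
  D `<=` A /\ forall e e', D e -> A e' -> le e' e -> D e'.

Lemma lower_contour_downset L : lower_contour le A L -> downset L.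
Proof. by case. Qed.

Lemma downsetU X Y : downset X -> downset Y -> downset (X `|` Y).
Proof.
move=> [XA X_down] [YA Y_down]; split; first by move=> e [/XA|/YA].
by move=> e e' [Xe|Ye] Ae' e'e; [left; apply: X_down Xe _ _|right; apply: Y_down Ye _ _].
Qed.

Lemma downsetI X Y : downset X -> downset Y -> downset (X `&` Y).
Proof.
move=> [XA X_down] [_ Y_down]; split; first by move=> e [/XA].
by move=> e e' [Xe Ye] Ae' e'e; split; [apply: X_down Xe _ _|apply: Y_down Ye _ _].
Qed.

Lemma downset_bigcup (I : Type) (P : set I) (F : I -> set E) :
  (forall i, P i -> downset (F i)) -> downset (\bigcup_(i in P) F i).
Proof.
move=> F_down; split; first by move=> e [i Pi /(proj1 (F_down i Pi))].
by move=> e e' [i Pi Fie] Ae' e'e; exists i => //; apply: (proj2 (F_down i Pi)) Fie _ _.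
Qed.

Lemma downset_bigcap (I : Type) (P : set I) (F : I -> set E) : P !=set0 ->
  (forall i, P i -> downset (F i)) -> downset (\bigcap_(i in P) F i).
Proof.
move=> [i0 Pi0] F_down; split; first by move=> e /(_ i0 Pi0) /(proj1 (F_down i0 Pi0)).
by move=> e e' Fe Ae' e'e i Pi; apply: (proj2 (F_down i Pi)) (Fe i Pi) _ _.
Qed.

Lemma downset_liminf (L : nat -> set E) :
  (forall n, downset (L n)) -> downset (set_liminf L).
Proof.
move=> L_down; apply: downset_bigcup => N _.
by apply: downset_bigcap => [|n _ //]; exists N => /=.
Qed.

Hypothesis le_pre : preorder_cond le.

Lemma exists_minimal_le e : A e -> exists2 m, minimals le A m & le m e.
Proof.
case: le_pre => le_refl le_trans le_stable Ae.
(* Otherwise [next] builds a strictly decreasing sequence below [e]. *)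
apply: contrapT => no_min.
have below x : exists y, A x /\ le x e -> [/\ A y, le y x & ~ le x y].
  have [[Ax xe]|] := pselect (A x /\ le x e); last by exists x.
  have /existsNP[y /not_implyP[Ay /not_implyP[yx /not_andP[]]]] :
      ~ (forall y, A y -> le y x -> equiv_pre le y x).
    by move=> x_min; apply: no_min; exists x.
  - by move=> /(_ yx).
  - by exists y.
have [next next_below] := choice below.
pose s n := iter n next e.
have s_below n : A (s n) /\ le (s n) e.
  elim: n => [|n [Asn sne]] /=; first by split => //; apply: le_refl.
  have [Ay ysn _] := next_below (s n) (conj Asn sne).
  by split => //; apply: le_trans ysn sne.
have s_dec n : le (s n.+1) (s n) by have [] := next_below _ (s_below n).
have [N sN_min] := le_stable s s_dec.
by have [_ _] := next_below _ (s_below N); apply; exact: (sN_min N.+1 (leqnSn N)).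
Qed.

Lemma lower_contour_meets_minimals L :
  lower_contour le A L -> exists2 m, minimals le A m & L m.
Proof.
move=> [[e Le] LA L_down]; have [m m_min me] := exists_minimal_le (LA e Le).
by exists m => //; apply: L_down Le _ me; case: m_min.
Qed.

End Downset.

Lemma finite_pigeonhole_antitone (T : eqType) (M : set T) (P : T -> nat -> Prop) :
  finite_set M -> (forall x m n, (m <= n)%N -> P x n -> P x m) ->
  (forall n, exists2 x, M x & P x n) -> exists2 x, M x & forall n, P x n.
Proof.
move=> /finite_seqP[s ->] P_anti; elim: s => [|y s IHs] sP.
  by have [] := sP 0%N.
have [Py|/existsNP[n0 Pyn0]] := pselect (forall n, P y n).
  by exists y => //=; rewrite mem_head.
have [n|x xs Px] := IHs; last by exists x => //=; rewrite in_cons xs orbT.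
have [x] := sP (maxn n n0); rewrite /= in_cons => /predU1P[->|xs Px].
  by move=> /(P_anti _ n0); rewrite leq_maxr => /(_ isT).
by exists x => //; apply: P_anti Px; rewrite leq_maxl.
Qed.

Section NonnegativeOnDownsets.
Variables (R : realType) (E : eqType) (le : E -> E -> Prop) (A : set E).
Variable h : set E -> R.
Hypotheses (h_split : split_additive h) (h_tight : tight h).
Hypothesis h_ge0 : forall D, downset le A D -> 0 <= h D.

Lemma downset_setI_le X Y :
  downset le A X -> downset le A Y -> h (X `&` Y) <= h X + h Y.
Proof.
move=> X_down Y_down; have := split_additive_setUI h_split X Y.
by have := h_ge0 (downsetU X_down Y_down); lra.
Qed.

Lemma downset_setU_le0 X Y : downset le A X -> downset le A Y ->
  h X <= 0 -> h Y <= 0 -> h (X `|` Y) <= 0.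
Proof.
move=> X_down Y_down; have := split_additive_setUI h_split X Y.
by have := h_ge0 (downsetI X_down Y_down); lra.
Qed.

Section Liminf.
Variable L : nat -> set E.
Hypotheses (L_down : forall n, downset le A (L n)) (hL : forall n, h (L n) <= 2 ^- n).

Let window N k := \bigcap_(n in [set n | (N <= n <= N + k)%N]) L n.
Let tail N := \bigcap_(n in [set n | (N <= n)%N]) L n.

Lemma h_window_le N k : h (window N k) <= 2 * 2 ^- N - 2 ^- (N + k).
Proof.
elim: k => [|k IHk].
  have -> : window N 0 = L N.
    apply/seteqP; split => [e /(_ N)|e LNe n /= Nn]; first by apply; rewrite /=; lia.
    by have -> : n = N by lia.
  by rewrite addn0; have := hL N; lra.
have -> : window N k.+1 = window N k `&` L (N + k.+1).
  apply/seteqP; split => [e Le|e [Le LSe] n /= Nn].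
    by split; [move=> n /= Nn|]; apply: Le => /=; lia.
  by have [->|?] := eqVneq n (N + k.+1)%N; last by apply: Le => /=; lia.
have window_down : downset le A (window N k).
  by apply: downset_bigcap => [|n _ //]; exists N => /=; lia.
apply: le_trans (downset_setI_le window_down (L_down _)) _.
by have := hL (N + k.+1); rewrite addnS exprV2S in IHk *; lra.
Qed.

Lemma h_tail_le N : h (tail N) <= 2 * 2 ^- N.
Proof.
have -> : tail N = \bigcap_k window N k.
  apply/seteqP; split => [e Le k _ n /= Nn|e Le n /= Nn]; first by apply: Le => /=; lia.
  by apply: (Le (n - N)%N I) => /=; lia.
apply: (le_of_eventually_agree h_split h_tight (eventually_agree_bigcap _)).
  by move=> j k jk e Le n /= Nn; apply: Le => /=; lia.
by exists 0%N => k _; have := h_window_le N k; have := exprV2_gt0 R (N + k); lra.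
Qed.

Lemma h_liminf_le0 : h (set_liminf L) <= 0.
Proof.
apply/ler_addgt0Pr => eps eps_gt0; rewrite add0r.
apply: (le_of_eventually_agree h_split h_tight (eventually_agree_bigcup _)).
  by move=> M N MN e Le n /= Nn; apply: Le => /=; lia.
have [N0 N0_small] := exprV2_small (divr_gt0 eps_gt0 (ltr0Sn R 1)).
exists N0 => N N0N; apply: le_trans (h_tail_le N) _.
by have := exprV2_le R N0N; lra.
Qed.

End Liminf.

Lemma exists_nonpositive_lower_contour :
  preorder_cond le -> finite_set (minimals le A) ->
  (forall d, 0 < d -> exists2 L, lower_contour le A L & h L <= d) ->
  exists2 L, lower_contour le A L & h L <= 0.
Proof.
move=> le_pre min_fin h_inf.
(* The common minimal element keeps the lim inf nonempty. *)
have [m _ m_in_L] : exists2 m, minimals le A m &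
    forall n, exists L, [/\ lower_contour le A L, L m & h L <= 2 ^- n].
  apply: finite_pigeonhole_antitone => // [x m n mn [L [L_lc Lx hL]]|n].
    by exists L; split => //; apply: le_trans hL (exprV2_le R mn).
  have [L L_lc hL] := h_inf _ (exprV2_gt0 R n).
  by have [x x_min Lx] := lower_contour_meets_minimals le_pre L_lc; exists x => //; exists L.
have [L L_spec] := choice m_in_L.
have L_down n : downset le A (L n) by have [/lower_contour_downset] := L_spec n.
exists (set_liminf L); last by apply: h_liminf_le0 => // n; have [] := L_spec n.
have [liminfA liminf_down] := downset_liminf L_down.
by split => //; exists m, 0%N => // n _; have [] := L_spec n.
Qed.

Lemma bigcup_nonpositive_le0 :
  h (\bigcup_(L in [set L | lower_contour le A L /\ h L <= 0]) L) <= 0.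
Proof.
set Ls := \bigcup_(L in _) L.
apply/ler_addgt0Pr => eps eps_gt0; rewrite add0r.
have [s h_s] := h_tight (divr_gt0 eps_gt0 (ltr0Sn R 1)).
have [U [U_down ULs hU Ls_s]] : exists U, [/\ downset le A U, U `<=` Ls, h U <= 0 &
    forall e, e \in s -> Ls e -> U e].
  elim: s {h_s} => [|e s [U [U_down ULs hU Ls_s]]].
    by exists set0; split => //; rewrite ?split_additive_set0 //; split => // e e' [].
  have [[L [L_lc hL] Le]|Ls_e] := pselect (Ls e).
    exists (U `|` L); split => [|||x].
    - exact: downsetU U_down (lower_contour_downset L_lc).
    - by move=> x [/ULs|Lx] //; exists L.
    - exact: downset_setU_le0 U_down (lower_contour_downset L_lc) hU hL.
    - by rewrite in_cons => /predU1P[->|/Ls_s xU] Lsx; [right|left; apply: xU].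
  exists U; split => // x; rewrite in_cons => /predU1P[->|/Ls_s//] /Ls_e [].
have Ls_sE : Ls `&` [set` s] = U `&` [set` s].
  by apply/seteqP; split => x [Lsx sx]; split => //; [apply: Ls_s|apply: ULs].
by have := le_of_setI_eq h_split h_s Ls_sE; lra.
Qed.

Theorem exists_largest_nonpositive_lower_contour :
  preorder_cond le -> finite_set (minimals le A) ->
  (forall d, 0 < d -> exists2 L, lower_contour le A L & h L <= d) ->
  exists Ls, [/\ lower_contour le A Ls, h Ls <= 0 &
    forall L, lower_contour le A L -> h L <= 0 -> L `<=` Ls].
Proof.
move=> le_pre min_fin h_inf.
have [L0 L0_lc hL0] := exists_nonpositive_lower_contour le_pre min_fin h_inf.
exists (\bigcup_(L in [set L | lower_contour le A L /\ h L <= 0]) L).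
split; [|exact: bigcup_nonpositive_le0|by move=> L L_lc hL e Le; exists L].
have [Ls_A Ls_down] := downset_bigcup (fun L (LP : lower_contour le A L /\ h L <= 0) =>
  lower_contour_downset LP.1).
by split => //; have [[e L0e] _ _] := L0_lc; exists e, L0.
Qed.

End NonnegativeOnDownsets.

Section Posterior.
Variables (R : realType) (E : choiceType) (pi0 : R) (FG FB : E -> R).
Hypotheses (pi0_gt0 : 0 < pi0) (pi0_lt1 : pi0 < 1).
Hypotheses (FG_pmf : is_pmf FG) (FB_pmf : is_pmf FB).
Hypothesis FGB_gt0 : forall e, 0 < FG e \/ 0 < FB e.

Definition marginal L := mass FG L * pi0 + mass FB L * (1 - pi0).

(* An additive substitute for [nu L - lam], see [nu_excessE]. *)
Definition nu_excess (lam : R) L :=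
  pi0 * (1 - lam) * mass FG L - lam * (1 - pi0) * mass FB L.

Lemma marginal_gt0 L : L !=set0 -> 0 < marginal L.
Proof.
move=> [e Le]; have eL : [set e] `<=` L by move=> x ->.
have := mass_le FG_pmf eL; have := mass_le FB_pmf eL; rewrite !mass_set1 // => FBe FGe.
have G_ge0 : 0 <= mass FG L * pi0 by rewrite mulr_ge0 ?mass_ge0 ?ltW.
have B_ge0 : 0 <= mass FB L * (1 - pi0) by rewrite mulr_ge0 ?mass_ge0 ?subr_ge0 ?ltW.
case: (FGB_gt0 e) => [/lt_le_trans/(_ FGe) G_gt0|/lt_le_trans/(_ FBe) B_gt0].
  by rewrite ltr_pwDl // mulr_gt0.
by rewrite ltr_wpDl // mulr_gt0 ?subr_gt0.
Qed.

Lemma marginal_le1 L : marginal L <= 1.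
Proof.
have := ler_wpM2r (ltW pi0_gt0) (mass_le1 FG_pmf L).
have pi0_le1 : 0 <= 1 - pi0 by rewrite subr_ge0 ltW.
have := ler_wpM2r pi0_le1 (mass_le1 FB_pmf L).
by rewrite /marginal; lra.
Qed.

Lemma nu_marginal L : L !=set0 -> nu pi0 FG FB L * marginal L = mass FG L * pi0.
Proof. by move=> L0; rewrite /nu -/(marginal L) divfK // gt_eqF // marginal_gt0. Qed.

Lemma nu_ge0 L : L !=set0 -> 0 <= nu pi0 FG FB L.
Proof.
move=> L0; rewrite -(pmulr_lge0 _ (marginal_gt0 L0)) nu_marginal //.
by rewrite mulr_ge0 ?mass_ge0 ?ltW.
Qed.

Lemma nu_le1 L : L !=set0 -> nu pi0 FG FB L <= 1.
Proof.
move=> L0; rewrite -(ler_pM2r (marginal_gt0 L0)) mul1r nu_marginal //.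
by rewrite /marginal lerDl mulr_ge0 ?mass_ge0 // subr_ge0 ltW.
Qed.

Lemma nu_excessE lam L : L !=set0 ->
  nu_excess lam L = (nu pi0 FG FB L - lam) * marginal L.
Proof. by move=> L0; rewrite mulrBl nu_marginal // /nu_excess /marginal; ring. Qed.

Lemma nu_excess_le0 lam L : L !=set0 ->
  (nu_excess lam L <= 0) = (nu pi0 FG FB L <= lam).
Proof. by move=> L0; rewrite nu_excessE // pmulr_lle0 ?marginal_gt0 // subr_le0. Qed.

Lemma nu_excess_split lam : split_additive (nu_excess lam).
Proof. by apply: split_additive_lincomb; apply: mass_split. Qed.

Lemma nu_excess_tight lam : tight (nu_excess lam).
Proof. by apply: tight_lincomb; apply: mass_tight. Qed.

Variables (le : E -> E -> Prop) (A : set E).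
Hypothesis A0 : A !=set0.

Definition nu_inf := inf [set nu pi0 FG FB L | L in lower_contour le A].

Let nu_lower_contour_has_inf : has_inf [set nu pi0 FG FB L | L in lower_contour le A].
Proof.
split; last by exists 0 => _ [L [L0 _ _] <-]; apply: nu_ge0.
by have [a Aa] := A0; exists (nu pi0 FG FB A), A => //; split => //; exists a.
Qed.

Lemma nu_inf_le L : lower_contour le A L -> nu_inf <= nu pi0 FG FB L.
Proof. by move=> L_lc; apply: ge_inf; [case: nu_lower_contour_has_inf|exists L]. Qed.

Lemma nu_excess_inf_ge0 D : downset le A D -> 0 <= nu_excess nu_inf D.
Proof.
move=> [DA D_down]; have [->|/set0P D0] := eqVneq D set0.
  by rewrite split_additive_set0 //; apply: nu_excess_split.
rewrite nu_excessE // mulr_ge0 ?subr_ge0 //; last exact: ltW (marginal_gt0 D0).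
by apply: nu_inf_le; split.
Qed.

Lemma nu_excess_inf_small d : 0 < d ->
  exists2 L, lower_contour le A L & nu_excess nu_inf L <= d.
Proof.
move=> d_gt0; have [_ [L L_lc <-] nuL] := inf_adherent d_gt0 nu_lower_contour_has_inf.
exists L => //; have [L0 _ _] := L_lc; rewrite nu_excessE //.
have := marginal_gt0 L0; have := marginal_le1 L; have := nu_inf_le L_lc.
by rewrite -/nu_inf in nuL; nra.
Qed.

End Posterior.

Theorem lemmaA6 (R : realType) (E : countType) (le : E -> E -> Prop)
  (pi0 : R) (FG FB : E -> R) (phi : R -> R) (A : set E) :
  preorder_cond le ->
  0 < pi0 < 1 ->
  is_pmf FG -> is_pmf FB ->
  (forall e, 0 < FG e \/ 0 < FB e) ->
  (forall x y, 0 <= x -> y <= 1 -> x < y -> phi x < phi y) ->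
  A !=set0 ->
  finite_set (minimals le A) ->
  exists Lstar, is_minimizer le phi pi0 FG FB A Lstar /\
    forall L, is_minimizer le phi pi0 FG FB A L -> L `<=` Lstar.
Proof.
move=> le_pre /andP[pi0_gt0 pi0_lt1] FG_pmf FB_pmf FGB_gt0 phi_lt A0 min_fin.
have phi_le x y : 0 <= x -> y <= 1 -> x <= y -> phi x <= phi y.
  by move=> x0 y1; rewrite le_eqVlt => /predU1P[-> //|/phi_lt-/(_ x0 y1)/ltW].
pose nuL := nu pi0 FG FB; pose lam := nu_inf pi0 FG FB le A.
have nu_range L : L !=set0 -> 0 <= nuL L /\ nuL L <= 1.
  by move=> L0; rewrite nu_ge0 ?nu_le1.
have [Ls [Ls_lc hLs Ls_max]] := exists_largest_nonpositive_lower_contour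
  (nu_excess_split pi0 FG_pmf FB_pmf lam) (nu_excess_tight pi0 FG_pmf FB_pmf lam)
  (nu_excess_inf_ge0 pi0_gt0 pi0_lt1 FG_pmf FB_pmf FGB_gt0 A0) le_pre min_fin
  (nu_excess_inf_small pi0_gt0 pi0_lt1 FG_pmf FB_pmf FGB_gt0 le A0).
have [Ls0 _ _] := Ls_lc.
have nu_Ls : nuL Ls <= lam by rewrite -(nu_excess_le0 pi0_gt0 pi0_lt1 FG_pmf FB_pmf FGB_gt0).
exists Ls; split.
  split=> // L L_lc; have [L0 _ _] := L_lc.
  apply: phi_le; [exact: (nu_range _ Ls0).1|exact: (nu_range _ L0).2|].
  exact: le_trans nu_Ls (nu_inf_le pi0_gt0 pi0_lt1 FG_pmf FB_pmf FGB_gt0 A0 L_lc).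
move=> L [L_lc L_min]; have [L0 _ _] := L_lc; apply: Ls_max => //.
rewrite (nu_excess_le0 pi0_gt0 pi0_lt1 FG_pmf FB_pmf FGB_gt0) //.
apply: le_trans nu_Ls; rewrite leNgt; apply/negP => nu_lt.
have := L_min Ls Ls_lc; rewrite /xi leNgt phi_lt //.
  exact: (nu_range _ Ls0).1.
exact: (nu_range _ L0).2.
Qed.
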